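(* Let $d\in\mathbb N$, $\alpha>0$, $\varepsilon>0$, and let $\mathcal A=\{a_1,\dots,a_m\}\subseteq(\mathbb Z^d)^*$ be a set of primitive vectors that positively span the linear space they generate (i.e., there are $\lambda_1,\dots,\lambda_m\ge0$, not all $0$, with $\sum\lambda_ia_i=0$). Let $\mathcal N(d,\alpha,\mathcal A)$ be the set of $d$-dimensional lattice polytopes $P$ with $\alpha$-canonical normal fan and $\mathcal N_{\mathrm{core}}(P)=\mathcal A$. Then \[ \{\operatorname{qcd}(P)\mid P\in\mathcal N(d,\alpha,\mathcal A),\ \operatorname{qcd}(P)\ge\varepsilon\} \] is finite.
   Context: A $d$-dimensional lattice polytope is written $P=\{x\in\mathbb R^d\mid \langle a_i,x\rangle\le b_i,\ 1\le i\le n\}$ with an irredundant system and primitive $a_i\in(\mathbb Z^d)^*$. For rational $c>0$, $P^{(c)}=\{x\mid \langle a_i,x\rangle\le b_i-c\ \forall i\}$; $\operatorname{qcd}(P)^{-1}=\max\{c>0\mid P^{(c)}\ne\emptyset\}$; with $c_0=\operatorname{qcd}(P)^{-1}$, $\operatorname{core}P=P^{(c_0)}$, and $\mathcal N_{\mathrm{core}}(P)$ is the set of those $a_i$ with $\langle a_i,y\rangle=b_i-c_0$ for all $y\in\operatorname{core}P$. The normal fan of $P$ is the complete fan whose cones are $\operatorname{cone}(a_i\mid i\in I)$ with $I$ the set of facets containing a given face. For a rational polyhedral cone $\sigma$ with primitive ray generators $a_1,\dots,a_k$, the height of $y\in\sigma$ is $\max\{\sum\lambda_i\mid y=\sum\lambda_ia_i,\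 \lambda_i\ge0\}$; $\sigma$ is $\alpha$-canonical if every nonzero $y\in\sigma\cap(\mathbb Z^d)^*$ has height at least $\alpha$; a fan is $\alpha$-canonical if all its cones are. *)

(* Points of R^d are row vectors 'rV[R]_d over an
   Archimedean real field R; dual lattice vectors are 'rV[int]_d. *)
From HB Require Import structures.
From mathcomp Require Import all_boot all_order all_algebra.
Set Implicit Arguments. Unset Strict Implicit. Unset Printing Implicit Defensive.
Import Order.TTheory GRing.Theory Num.Theory.
Local Open Scope ring_scope.

Section PolyDefs.
Variables (R : archiRealFieldType) (d : nat).

Definition intvec (v : 'rV[int]_d) : 'rV[R]_d := map_mx (fun z : int => z%:~R) v.

Definition dotZ (a : 'rV[int]_d) (x : 'rV[R]_d) : R :=
  \sum_(j < d) (a 0 j)%:~R * x 0 j.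

Definition dotR (w x : 'rV[R]_d) : R := \sum_(j < d) w 0 j * x 0 j.

Definition primitive (a : 'rV[int]_d) : Prop :=
  forall k : int, (forall j, (k %| a ord0 j)%Z) -> (k %| 1)%Z.

Variables (n : nat) (a : 'I_n -> 'rV[int]_d) (b : 'I_n -> R).

Definition Pc (c : R) (x : 'rV[R]_d) : Prop := forall i, dotZ (a i) x <= b i - c.
Definition Ppoly (x : 'rV[R]_d) : Prop := Pc 0 x.

Definition irredundant : Prop :=
  forall i, exists x, (forall j, j != i -> dotZ (a j) x <= b j) /\ b i < dotZ (a i) x.

Definition full_dimensional : Prop := exists x, forall i, dotZ (a i) x < b i.

Definition bounded : Prop :=
  exists M : R, forall x, Ppoly x -> forall j, `|x 0 j| <= M.

(* P is the convex hull of its lattice points *)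
Definition lattice_hull : Prop :=
  forall x, Ppoly x -> exists k (p : 'I_k -> 'rV[int]_d) (lam : 'I_k -> R),
    [/\ forall t, 0 <= lam t, \sum_t lam t = 1,
        forall t, Ppoly (intvec (p t)) & x = \sum_t lam t *: intvec (p t)].

Definition lattice_polytope_system : Prop :=
  [/\ forall i, primitive (a i), irredundant, full_dimensional, bounded & lattice_hull].

(* c0 = qcd(P)^{-1} = max { c > 0 | P^(c) nonempty } *)
Definition qcd_inv (c0 : R) : Prop :=
  [/\ 0 < c0, exists y, Pc c0 y & forall c, 0 < c -> (exists y, Pc c y) -> c <= c0].

(* v lies in N_core(P), where c0 = qcd(P)^{-1} and core P = P^(c0) *)
Definition in_Ncore (c0 : R) (v : 'rV[int]_d) : Prop :=
  exists i, a i = v /\ forall y, Pc c0 y -> dotZ (a i) y = b i - c0.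

Definition cone_comb (I : 'I_n -> Prop) (lam : 'I_n -> R) (y : 'rV[int]_d) : Prop :=
  [/\ forall i, 0 <= lam i, forall i, ~ I i -> lam i = 0
    & intvec y = \sum_i lam i *: intvec (a i)].

(* cone(a_i | i in I) is alpha-canonical: every nonzero lattice point of it
   has height (max of sum lam_i over representations) at least alpha *)
Definition alpha_canonical_cone (alpha : R) (I : 'I_n -> Prop) : Prop :=
  forall y : 'rV[int]_d, y != 0 -> (exists lam, cone_comb I lam y) ->
    exists lam, cone_comb I lam y /\ alpha <= \sum_i lam i.

Definition face_pt (w y : 'rV[R]_d) : Prop :=
  Ppoly y /\ forall z, Ppoly z -> dotR w z <= dotR w y.

Definition facets_of (w : 'rV[R]_d) (i : 'I_n) : Prop :=
  forall y, face_pt w y -> dotZ (a i) y = b i.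

(* the normal fan: cones cone(a_i | i in I_F) over nonempty faces F *)
Definition alpha_canonical_fan (alpha : R) : Prop :=
  forall w, (exists y, face_pt w y) -> alpha_canonical_cone alpha (facets_of w).

End PolyDefs.

From HB Require Import structures.
From mathcomp Require Import all_boot all_order all_algebra.
From mathcomp Require Import lra ring.
Import Order.TTheory GRing.Theory Num.Theory.
Local Open Scope ring_scope.

(* Let y be a point of core P and c0 = qcd(P)^{-1}.  Every
   A_i is a core normal, i.e. the normal of a facet i of P with
   <A_i, y> = b_i - c0, and the right-hand sides b_i of a lattice polytope
   are integers (each facet contains a lattice point).  Hence
   <A_i, y> + c0 is an integer for every i.  Since the A_i positively span
   their linear span, they admit an INTEGER relation sum nu_i A_i = 0 with
   S = sum nu_i <> 0; pairing with y gives c0 * S = sum nu_i (<A_i,y> + c0),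
   an integer.  Thus c0 = k/|S| with k a natural number, and eps <= 1/c0
   bounds k by |S|/eps: qcd(P) = |S|/k ranges over a finite list. *)

Section Pairing.
Context {R : archiRealFieldType} {d : nat}.

Lemma dotZ_lin (a : 'rV[int]_d) (u v : R) x y :
  dotZ a (u *: x + v *: y) = u * dotZ a x + v * dotZ a y.
Proof.
rewrite /dotZ !mulr_sumr -big_split; apply: eq_bigr => j _.
rewrite !mxE /=; ring.
Qed.

Lemma dotZ_sum (a : 'rV[int]_d) k (c : 'I_k -> R) v :
  dotZ a (\sum_(t < k) c t *: v t) = \sum_t c t * dotZ a (v t).
Proof.
rewrite /dotZ; under eq_bigr do rewrite summxE mulr_sumr.
rewrite exchange_big; apply: eq_bigr => t _; rewrite mulr_sumr.
apply: eq_bigr => j _; rewrite !mxE /=; ring.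
Qed.

Lemma dotZ_int (a p : 'rV[int]_d) : dotZ a (intvec R p) \is a Num.int.
Proof.
rewrite /dotZ; apply: rpred_sum => j _; rewrite mxE.
by apply: rpredM; apply: intr_int.
Qed.

Lemma dotZ_int_comb m (nu : 'I_m -> int) (A : 'I_m -> 'rV[int]_d) (y : 'rV[R]_d) :
  \sum_i (nu i)%:~R * dotZ (A i) y
  = \sum_(j < d) (\sum_i nu i * A i 0 j)%:~R * y 0 j.
Proof.
rewrite /dotZ; under eq_bigr do rewrite mulr_sumr.
rewrite exchange_big; apply: eq_bigr => j _.
rewrite rmorph_sum mulr_suml; apply: eq_bigr => i _.
by rewrite rmorphM /= mulrA.
Qed.

End Pairing.

Section FacetIntegrality.
Context {R : archiRealFieldType} {d n : nat}.
Context {a : 'I_n -> 'rV[int]_d} {b : 'I_n -> R}.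

(* By irredundancy and full-dimensionality, each facet hyperplane
   <a_j, x> = b_j meets P: move from an interior point towards a point
   violating only the j-th inequality. *)
Lemma facet_meets_polytope j :
  irredundant a b -> full_dimensional a b ->
  exists x, Ppoly a b x /\ dotZ (a j) x = b j.
Proof.
move=> hirr [x0 hx0]; have [x1 [hx1 hx1j]] := hirr j.
have h0 := hx0 j.
have hd : dotZ (a j) x1 - dotZ (a j) x0 != 0.
  by rewrite subr_eq0 gt_eqF //; apply: lt_trans hx1j.
have hpos : 0 < dotZ (a j) x1 - dotZ (a j) x0 by lra.
pose t := (b j - dotZ (a j) x0) / (dotZ (a j) x1 - dotZ (a j) x0).
have ht0 : 0 <= t by apply: divr_ge0; lra.
have ht1 : 0 <= 1 - t by rewrite subr_ge0 /t ler_pdivrMr // mul1r; lra.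
have htd : (1 - t) * dotZ (a j) x0 + t * dotZ (a j) x1 = b j.
  by rewrite /t; field.
exists ((1 - t) *: x0 + t *: x1); split; last by rewrite dotZ_lin.
move=> k; rewrite subr0 dotZ_lin; have [->|hkj] := eqVneq k j; first by rewrite htd.
have := ler_wpM2l ht1 (ltW (hx0 k)).
have := ler_wpM2l ht0 (hx1 k hkj); lra.
Qed.

(* If a convex combination of lattice points of P lies on the facet
   hyperplane of j, then so does one of these lattice points. *)
Lemma facet_lattice_point {j x} :
  lattice_hull a b -> Ppoly a b x -> dotZ (a j) x = b j ->
  exists p, dotZ (a j) (intvec R p) = b j.
Proof.
move=> hhull hxP hxj.
have [k [p [lam [hl hs hp hx]]]] := hhull x hxP.
have hsum : \sum_t lam t * (b j - dotZ (a j) (intvec R (p t))) = 0.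
  under eq_bigr do rewrite mulrBr.
  by rewrite sumrB -mulr_suml hs mul1r -dotZ_sum -hx hxj subrr.
have hnn i : true -> 0 <= lam i * (b j - dotZ (a j) (intvec R (p i))).
  by move=> _; apply: mulr_ge0 => //; rewrite subr_ge0 -[b j]subr0; exact: hp.
have [t0 ht0|hn] := pickP (fun t => lam t != 0); last first.
  move: hs; rewrite big1 => [/eqP|s _]; first by rewrite eq_sym oner_eq0.
  by have /negbFE/eqP := hn s.
have hzero := psumr_eq0P hnn hsum.
exists (p t0); move/eqP: (hzero t0 isT).
by rewrite mulf_eq0 (negbTE ht0) /= subr_eq0 => /eqP.
Qed.

Lemma rhs_int : lattice_polytope_system a b -> forall j, b j \is a Num.int.
Proof.
case=> _ hirr hfull _ hhull j.
have [x [hxP hxj]] := facet_meets_polytope j hirr hfull.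
have [p <-] := facet_lattice_point hhull hxP hxj.
exact: dotZ_int.
Qed.

End FacetIntegrality.

Section IntegerRelation.
Context {d m : nat} {A : 'I_m -> 'rV[int]_d}.

Definition unbalanced_relation (nu : 'I_m -> int) : Prop :=
  (forall j, \sum_i nu i * A i 0 j = 0) /\ \sum_i nu i != 0.

Let M : 'M[rat]_(d, m) := \matrix_(j, i) (A i 0 j)%:~R.
Let ones : 'rV[rat]_m := const_mx 1.

(* A nontrivial nonnegative relation forbids a functional taking the value
   1 on every A_i: pairing it with the relation would give sum lam_i = 0. *)
Lemma ones_not_in_rowspace {R : archiRealFieldType} :
  (exists lam : 'I_m -> R, [/\ forall i, 0 <= lam i, exists i, lam i != 0
            & \sum_i lam i *: intvec R (A i) = 0]) ->
  ~~ (ones <= M)%MS.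
Proof.
case=> lam [hl [i0 hi0] hsum]; apply/negP => /submxP [y hy].
have h1 i : 1 = \sum_j ratr (y 0 j) * (A i 0 j)%:~R :> R.
  have := congr1 (fun N : 'rV[rat]_m => ratr (N 0 i) : R) hy.
  rewrite /ones /M !mxE rmorph1 => e; apply: eq_trans e _; rewrite rmorph_sum.
  by apply: eq_bigr => j _; rewrite mxE rmorphM rmorph_int.
have hs0 : \sum_i lam i = 0.
  transitivity (\sum_i lam i * \sum_j ratr (y 0 j) * (A i 0 j)%:~R).
    by apply: eq_bigr => i _; rewrite -h1 mulr1.
  under eq_bigr do rewrite mulr_sumr.
  rewrite exchange_big /=; apply: big1 => j _.
  have := congr1 (fun N : 'rV[R]_d => N 0 j) hsum.
  rewrite summxE mxE => hj.
  transitivity (ratr (y 0 j) * \sum_k (lam k *: intvec R (A k)) 0 j).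
    by rewrite mulr_sumr; apply: eq_bigr => i _; rewrite !mxE /=; ring.
  by rewrite hj mulr0.
have hzero := psumr_eq0P (fun i _ => hl i) hs0.
have /eqP := hzero i0 isT.
by rewrite (negbTE hi0).
Qed.

(* Dually, a rational relation with nonzero coefficient sum exists: take a
   column of the cokernel of M not annihilated by the all-ones vector. *)
Lemma rational_relation :
  ~~ (ones <= M)%MS ->
  exists mu : 'I_m -> rat,
    (forall j, \sum_i (A i 0 j)%:~R * mu i = 0) /\ \sum_i mu i != 0.
Proof.
rewrite submxE => hu.
have [k hk|hn] := pickP (fun k => (ones *m cokermx M) 0 k != 0); last first.
  case/negP: hu; apply/eqP/matrixP => i k.
  by rewrite (ord1 i); have /negbFE/eqP -> := hn k; rewrite mxE.
exists (fun i => cokermx M i k); split.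
  move=> j; have := congr1 (fun N : 'M[rat]_(d, m) => N j k) (mulmx_coker M).
  rewrite !mxE => e; rewrite -[RHS]e.
  by apply: eq_bigr => i _; rewrite [M j i]mxE.
by move: hk; rewrite mxE; under eq_bigr do rewrite mxE mul1r.
Qed.

(* Multiplying by the product of the denominators makes a rational
   relation integral, keeping its coefficient sum nonzero. *)
Lemma integral_relation {mu : 'I_m -> rat} :
  (forall j, \sum_i (A i 0 j)%:~R * mu i = 0) -> \sum_i mu i != 0 ->
  exists nu, unbalanced_relation nu.
Proof.
move=> hmu hS.
pose D := \prod_i denq (mu i).
pose nu i := numq (mu i) * \prod_(i' | i' != i) denq (mu i').
have hnu i : (nu i)%:~R = D%:~R * mu i :> rat.
  by rewrite /nu /D [X in X%:~R * _](bigD1 i) //= !intrM numqE; ring.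
have hD : D%:~R != 0 :> rat.
  by rewrite intr_eq0; apply/prodf_neq0 => i _; exact: denq_neq0.
exists nu; split.
  move=> j; apply/eqP; rewrite -(intr_eq0 rat) rmorph_sum.
  under eq_bigr do rewrite rmorphM /= hnu -mulrA [mu _ * _]mulrC.
  by rewrite -mulr_sumr hmu mulr0.
rewrite -(intr_eq0 rat) rmorph_sum /=.
under eq_bigr do rewrite hnu.
by rewrite -mulr_sumr mulf_neq0.
Qed.

End IntegerRelation.

Lemma relation_scaled_int (R : archiRealFieldType) d m
    (A : 'I_m -> 'rV[int]_d) (nu : 'I_m -> int) (y : 'rV[R]_d) (c : R) :
  (forall j, \sum_i nu i * A i 0 j = 0) ->
  (forall i, dotZ (A i) y + c \is a Num.int) ->
  c * (\sum_i nu i)%:~R \is a Num.int.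
Proof.
move=> hnu hw.
have -> : c * (\sum_i nu i)%:~R = \sum_i (nu i)%:~R * (dotZ (A i) y + c).
  under [RHS]eq_bigr do rewrite mulrDr.
  rewrite big_split /= dotZ_int_comb [X in _ = X + _]big1 ?add0r => [|j _];
    last by rewrite hnu mul0r.
  by rewrite rmorph_sum mulr_sumr; apply: eq_bigr => i _; rewrite mulrC.
by apply: rpred_sum => i _; apply: rpredM; [exact: intr_int | exact: hw].
Qed.

Section QcdValues.
Context {R : archiRealFieldType}.

Definition qcd_candidates (S eps : R) : seq R :=
  [seq S / i%:R | i <- iota 0 (Num.Def.archi_bound (S / eps)).+1].

Lemma qcd_in_candidates (S eps c0 : R) :
  0 < S -> 0 < eps -> 0 < c0 -> c0 * S \is a Num.int -> eps <= c0^-1 ->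
  c0^-1 \in qcd_candidates S eps.
Proof.
move=> hS heps hc0 /intrP [k hk] hle.
have hkn : (`|k|%N)%:R = c0 * S :> R.
  by rewrite natr_absz intr_norm -hk ger0_norm // mulr_ge0 // ltW.
have hbound : c0 * S <= S / eps.
  rewrite ler_pdivlMr // mulrAC ler_piMl // ?(ltW hS) //.
  by have := ler_wpM2l (ltW hc0) hle; rewrite mulfV // gt_eqF.
have hK : S / eps < (Num.Def.archi_bound (S / eps))%:R.
  by apply: archi_boundP; apply: divr_ge0; apply: ltW.
apply/mapP; exists `|k|%N.
  rewrite mem_iota leq0n add0n ltnS -(ler_nat R) hkn.
  exact: le_trans hbound (ltW hK).
by rewrite hkn; field; rewrite !gt_eqF.
Qed.

End QcdValues.

Theorem lemma3p9 (R : archiRealFieldType) (d : nat) (alpha eps : R)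
  (halpha : 0 < alpha) (heps : 0 < eps)
  (m : nat) (A : 'I_m -> 'rV[int]_d)
  (hprim : forall i, primitive (A i))
  (hpos : exists lam : 'I_m -> R, [/\ forall i, 0 <= lam i, exists i, lam i != 0
            & \sum_i lam i *: intvec R (A i) = 0]) :
  exists L : seq R,
    forall (n : nat) (a : 'I_n -> 'rV[int]_d) (b : 'I_n -> R) (c0 : R),
      lattice_polytope_system a b ->
      alpha_canonical_fan a b alpha ->
      qcd_inv a b c0 ->
      (forall v, (exists i, A i = v) <-> in_Ncore a b c0 v) ->
      eps <= c0^-1 ->
      c0^-1 \in L.
Proof.
have [mu [hmu hmuS]] := rational_relation (ones_not_in_rowspace hpos).
have [nu [hnu hS]] := integral_relation hmu hmuS.
pose S : R := `|(\sum_i nu i)%:~R|.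
have hSpos : 0 < S by rewrite normr_gt0 intr_eq0.
exists (qcd_candidates S eps) => n a b c0 hsys _ [hc0 [y hy] _] hcore heps'.
have hw i : dotZ (A i) y + c0 \is a Num.int.
  have [j [<- hj]] := proj1 (hcore (A i)) (ex_intro _ i erefl).
  by rewrite hj // subrK; exact: rhs_int hsys j.
apply: qcd_in_candidates => //.
rewrite /S -(gtr0_norm hc0) -normrM.
exact/intr_nat/natr_norm_int/relation_scaled_int.
Qed.
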